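(* For $0\le k\le n$, $2^kS_D(n,k)=\#D_{\subseteq}([n],k)$.
   Context: Let $\langle n\rangle=\{-n,\dots,-1,0,1,\dots,n\}$, $\overline{x}=-x$, and $\overline{T}=\{\overline{t}:t\in T\}$. An ordered signed partition of $\langle n\rangle$ with $2k+1$ blocks is a sequence $(T_0,T_1,\dots,T_{2k})$ of pairwise disjoint nonempty subsets whose union is $\langle n\rangle$, with $0\in T_0$, $T_0=\overline{T_0}$, and $T_{2i}=\overline{T_{2i-1}}$ for $i\in[k]$; the underlying set $\{T_0,\dots,T_{2k}\}$ is a signed partition. A signed partition is of type D if $\#T_0\neq3$. $S_D(n,k)$ is the number of type D signed partitions of $\langle n\rangle$ with $2k+1$ blocks. For $S\subset\mathbb{Z}\setminus\{0\}$, a standard signed partition (SSP) of $S$ with $k$ blocks is a sequence $(S_1,\dots,S_k)$ of disjoint nonempty subsets of $S\cup\overline{S}$ such that $\{S_1,\dots,S_k,\overline{S_1},\dots,\overline{S_k}\}$ is a partition of $S\cup\overline{S}$ into $2k$ blocks and $\min|S_1|\le\dots\le\min|S_k|$, where $|S_i|=\{|j|:j\in S_i\}$. A partial standard signed partition (PSSP) of $S$ is an SSP of a subset of $S$ (possibly empty). $B(S,k)$ (resp. $B_{\subseteq}(S,k)$) is the set of SSPs (resp. PSSPs) of $S$ with $k$ blocks, and $D_{\subseteq}([n],k)=B_{\subseteq}([n],k)\setminus\bigcup_{i=1}^nB([n]\setminus\{i\},k)$. *)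

From mathcomp Require Import all_boot all_order all_algebra zify.
Unset Strict Implicit. Unset Printing Implicit Defensive.
Import Order.TTheory GRing.Theory Num.Theory.

(* Encoding of <n> = {-n,...,n}: the element i : 'I_(2n+1) represents the
   integer i - n.  Hence 0 is represented by n, and x |-> -x is rev_ord. *)
Definition elt (n : nat) := 'I_(n.*2.+1).

Definition ival {n} (x : elt n) : int := (x : nat)%:Z - n%:Z.

Definition zero (n : nat) : elt n := inord n.

Definition neg {n} (x : elt n) : elt n := rev_ord x.

Definition negS {n} (A : {set elt n}) : {set elt n} := neg @: A.

Definition absn {n} (x : elt n) : nat := `|ival x|%N.

Lemma ival_neg n (x : elt n) : ival (neg x) = (- ival x)%R.
Proof. rewrite /ival /neg /=; have := ltn_ord x; move: (x : nat) => m; rewrite -addnn; lia. Qed.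

Lemma ival_zero n : ival (zero n) = 0%R.
Proof. rewrite /ival /zero inordK; [exact: subrr | rewrite -addnn; lia]. Qed.

Lemma ival_inj n : injective (@ival n).
Proof. move=> x y; rewrite /ival => h; apply: val_inj => /=; lia. Qed.

Definition ordered_signed_partition n k
    (T : {ffun 'I_(k.*2.+1) -> {set elt n}}) : bool :=
  [forall i, forall j, (i != j) ==> [disjoint T i & T j]] &&
  [forall i, T i != set0] &&
  (\bigcup_i T i == [set: elt n]) &&
  (zero n \in T ord0) && (T ord0 == negS (T ord0)) &&
  (* T_{2i} = \overline{T_{2i-1}} for i in [k] (written with i-1 : 'I_k) *)
  [forall i : 'I_k, T (inord (i.*2.+2)) == negS (T (inord (i.*2.+1)))].

Definition typeD_signed_partition n k (P : {set {set elt n}}) : bool :=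
  [exists T : {ffun 'I_(k.*2.+1) -> {set elt n}},
     [&& ordered_signed_partition n k T,
         P == [set T i | i : 'I_(k.*2.+1)] &
         #|T ord0| != 3]].

Definition S_D (n k : nat) : nat := #|[set P | typeD_signed_partition n k P]|.

Definition posn n : {set elt n} := [set x | (0 < ival x)%R].

Definition minabs {n} (A : {set elt n}) : nat := \big[minn/n]_(x in A) absn x.

Definition SSP n k (S : {set elt n}) (f : {ffun 'I_k -> {set elt n}}) : bool :=
  let D := S :|: negS S in
  let P := [set f i | i : 'I_k] :|: [set negS (f i) | i : 'I_k] in
  [&& [forall i, (f i \subset D) && (f i != set0)],
      [forall i, forall j, (i != j) ==> [disjoint f i & f j]],
      partition P D, #|P| == k.*2 &
      [forall i : 'I_k, forall j : 'I_k,
          ((i : nat) <= j) ==> (minabs (f i) <= minabs (f j))]].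

Definition B n k (S : {set elt n}) : {set {ffun 'I_k -> {set elt n}}} :=
  [set f | SSP n k S f].

Definition B_sub n k : {set {ffun 'I_k -> {set elt n}}} :=
  [set f | [exists S : {set elt n}, (S \subset posn n) && (f \in B n k S)]].

Definition D_sub n k : {set {ffun 'I_k -> {set elt n}}} :=
  B_sub n k :\: \bigcup_(i in posn n) B n k (posn n :\ i).

(* A standard signed partition (S_1, ..., S_k) of S, a subset of [n], gives
   the signed partition of <n> whose blocks are the 2k sets +-S_i together
   with T_0 = <n> minus (S u -S).  Since #T_0 = 2 #([n] \ S) + 1, it is of
   type D exactly when #([n] \ S) <> 1, which is the condition defining
   D_subseteq([n], k).  Conversely a signed partition with 2k+1
   blocks consists of T_0 and k pairs {X, -X}; listing the pairs by
   increasing min |X| and choosing freely which member of each pair is S_i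
   yields exactly 2^k SSPs.  The choice is recorded by whether S_i contains
   +min |S_i| or -min |S_i|. *)

From mathcomp Require Import all_boot all_order all_algebra zify.
Import Order.TTheory.

Set Implicit Arguments.
Unset Strict Implicit.
Unset Printing Implicit Defensive.

Section SignedElements.
Variable n : nat.
Implicit Types (x y : elt n) (A : {set elt n}).

Lemma negK : involutive (@neg n).
Proof. exact: rev_ordK. Qed.

Lemma neg_inj : injective (@neg n).
Proof. exact: inv_inj negK. Qed.

Lemma val_neg x : (neg x : nat) = n + n - x.
Proof. by rewrite /= subSS addnn. Qed.

Lemma val_elt_le x : (x : nat) <= n + n.
Proof. by rewrite addnn -ltnS. Qed.

Lemma val_zero : (zero n : nat) = n.
Proof. by rewrite /zero inordK // -addnn; lia. Qed.

Lemma neg_zero : neg (zero n) = zero n.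
Proof. by apply: ord_inj; rewrite val_neg val_zero addnK. Qed.

Lemma mem_posn x : (x \in posn n) = (n < x).
Proof. rewrite inE /ival; lia. Qed.

Lemma zero_notin_posn : zero n \notin posn n.
Proof. by rewrite mem_posn val_zero ltnn. Qed.

Lemma absn_le x : absn x <= n.
Proof. have := val_elt_le x; rewrite /absn /ival; lia. Qed.

Lemma absn_neg x : absn (neg x) = absn x.
Proof. by rewrite /absn ival_neg abszN. Qed.

Lemma eq_absn x y : absn x = absn y -> y = x \/ y = neg x.
Proof.
rewrite /absn => e; have [ey|ey] : ival y = ival x \/ ival y = (- ival x)%R by lia.
- by left; apply: ival_inj.
- by right; apply: ival_inj; rewrite ival_neg.
Qed.

Lemma mem_negS A x : (x \in negS A) = (neg x \in A).
Proof. by rewrite -{1}[x]negK (mem_imset _ _ neg_inj). Qed.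

Lemma negSK : involutive (@negS n).
Proof. by move=> A; apply/setP => x; rewrite !mem_negS negK. Qed.

Lemma card_negS A : #|negS A| = #|A|.
Proof. exact/card_imset/neg_inj. Qed.

Lemma minabs_attained A : A != set0 -> exists2 x, x \in A & absn x = minabs A.
Proof.
case/set0Pn => x0 x0A; rewrite /minabs -minEnat.
have [x xA ->] := eq_bigmin (T := nat) x0 (mem A) absn x0A (fun x _ => absn_le x).
by exists x.
Qed.

Lemma minabs_negS A : minabs (negS A) = minabs A.
Proof.
rewrite /minabs /negS -!minEnat bigmin_imset.
by apply: eq_bigr => x _; apply: absn_neg.
Qed.

Lemma card_symmetric A : negS A = A -> zero n \in A ->
  #|A| = (#|A :&: posn n|).*2.+1.
Proof.
move=> Asym A0; have Aneg x : (neg x \in A) = (x \in A) by rewrite -mem_negS Asym.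
have AD : A :\: posn n = zero n |: negS (A :&: posn n).
  apply/setP => x; rewrite in_setD in_setU1 mem_negS in_setI !mem_posn val_neg Aneg.
  have [->|x0] := eqVneq x (zero n); first by rewrite A0 val_zero ltnn.
  move: x0; rewrite -val_eqE /= val_zero; have := val_elt_le x.
  by case: (x \in A) => /=; lia.
rewrite -(cardsID (posn n) A) AD cardsU1 card_negS mem_negS neg_zero in_setI.
by rewrite (negPf zero_notin_posn) andbF add1n addnS addnn.
Qed.

End SignedElements.

Lemma card_setD_eq1P (T : finType) (A P : {set T}) : A \subset P ->
  reflect (exists2 i, i \in P & A = P :\ i) (#|P :\: A| == 1).
Proof.
move=> /subsetP AP; apply: (iffP cards1P) => [[i Ei]|[i iP ->]].
  have /setDP [iP iA] : i \in P :\: A by rewrite Ei set11.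
  exists i => //; apply/setP => x; move/setP/(_ x): Ei.
  rewrite !inE; case: eqP => [->|_]; first by rewrite (negPf iA).
  by case xA: (x \in A) => /=; [rewrite AP | move=> ->].
exists i; apply/setP => x; rewrite !inE; case: eqP => [->|]; first by rewrite iP.
by case: (x \in P).
Qed.

Section SignedFamilies.
Variables n k : nat.
Implicit Types (f g : 'I_k -> {set elt n}) (S : {set elt n}).

Definition sblock f (p : 'I_k * bool) : {set elt n} :=
  if p.2 then f p.1 else negS (f p.1).

Definition sblocks f := [set sblock f p | p : 'I_k * bool].

Definition support f := cover (sblocks f).

Definition signed_family f :=
  [/\ forall p, sblock f p != set0,
      forall p q, p != q -> [disjoint sblock f p & sblock f q] &
      forall p, zero n \notin sblock f p].

Definition minabs_sorted f :=
  forall i j : 'I_k, i <= j -> minabs (f i) <= minabs (f j).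

Lemma sblocksE f : [set f i | i : 'I_k] :|: [set negS (f i) | i : 'I_k] = sblocks f.
Proof.
apply/setP => X; rewrite inE; apply/orP/imsetP.
- by case=> /imsetP [i _ ->]; [exists (i, true) | exists (i, false)].
- by case=> [[i []] _ ->]; [left | right]; apply: imset_f.
Qed.

Lemma mem_sblocks f p : sblock f p \in sblocks f.
Proof. exact: imset_f. Qed.

Lemma negS_sblock f i b : negS (sblock f (i, b)) = sblock f (i, ~~ b).
Proof. by case: b; rewrite /sblock /= ?negSK. Qed.

Lemma minabs_sblock f p : minabs (sblock f p) = minabs (f p.1).
Proof. by case: p => i []; rewrite /sblock /= ?minabs_negS. Qed.

Lemma mem_support f x : reflect (exists p, x \in sblock f p) (x \in support f).
Proof.
apply: (iffP bigcupP) => [[X /imsetP [p _ ->] xX]|[p xp]]; first by exists p.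
by exists (sblock f p); rewrite ?mem_sblocks.
Qed.

Lemma sblock_sub_support f p : sblock f p \subset support f.
Proof. by apply/subsetP => x xp; apply/mem_support; exists p. Qed.

Lemma negS_support f : negS (support f) = support f.
Proof.
apply/setP => x; rewrite mem_negS.
apply/mem_support/mem_support => -[[i b] xp]; exists (i, ~~ b);
  by move: xp; rewrite -negS_sblock mem_negS ?negK.
Qed.

Lemma setU_negS_posn S : S \subset posn n -> (S :|: negS S) :&: posn n = S.
Proof.
move=> /subsetP Spos; apply/setP => x; rewrite in_setI in_setU mem_negS.
case xS: (x \in S); first by rewrite Spos.
apply/negP => /andP [/Spos]; rewrite !mem_posn val_neg; have := val_elt_le x; lia.
Qed.

Definition blocks f := (~: support f) |: sblocks f.

Section OneFamily.
Variable f : 'I_k -> {set elt n}.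
Hypothesis ff : signed_family f.

Lemma zero_notin_support : zero n \notin support f.
Proof. by have [_ _ f0] := ff; apply/mem_support => -[p]; apply/negP. Qed.

Lemma sblock_inj : injective (sblock f).
Proof.
have [fne fdisj _] := ff; move=> p q e; apply/eqP; apply: contraT => /fdisj.
by rewrite e -setI_eq0 setIid (negPf (fne q)).
Qed.

Lemma card_sblocks : #|sblocks f| = k.*2.
Proof. by rewrite card_imset ?card_prod ?card_ord ?card_bool ?muln2 //; apply: sblock_inj. Qed.

Lemma minabs_inj : injective (fun i => minabs (f i)).
Proof.
have [fne fdisj _] := ff; move=> i j e.
have [x xi ex] := minabs_attained (fne (i, true)).
have [y yj ey] := minabs_attained (fne (j, true)).
apply/eqP; apply: contraT => ij.
have [b yb] : exists b, y \in sblock f (i, b).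
  case: (eq_absn (etrans ex (etrans e (esym ey)))) => ->; first by exists true.
  by exists false; rewrite mem_negS negK.
have := fdisj (j, true) (i, b); rewrite xpair_eqE eq_sym (negPf ij).
by move=> /(_ isT) /disjointFr /(_ yj); rewrite yb.
Qed.

Lemma support_posn : (support f :&: posn n) :|: negS (support f :&: posn n) = support f.
Proof.
apply/setP => x; rewrite in_setU mem_negS !in_setI !mem_posn val_neg.
have -> : (neg x \in support f) = (x \in support f) by rewrite -mem_negS negS_support.
case xf: (x \in support f) => //=.
have : x != zero n by apply: contraTneq xf => ->; apply: zero_notin_support.
rewrite -val_eqE /= val_zero; have := val_elt_le x; lia.
Qed.

Lemma card_setC_support : #|~: support f| = (#|posn n :\: support f|).*2.+1.
Proof.
rewrite card_symmetric; first by rewrite setIC -setDE.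
- by apply/setP => x; rewrite mem_negS !in_setC -mem_negS negS_support.
- by rewrite in_setC zero_notin_support.
Qed.

Lemma sblocks_blocks : sblocks f = [set X in blocks f | zero n \notin X].
Proof.
have [_ _ f0] := ff; apply/setP => X; rewrite inE in_setU1.
apply/idP/andP => [fX|[/orP [/eqP -> | //]]]; last by rewrite in_setC zero_notin_support.
by split; [rewrite fX orbT | case/imsetP: fX => p _ ->].
Qed.

End OneFamily.

Lemma SSP_signed_family S (f : {ffun 'I_k -> {set elt n}}) : S \subset posn n ->
  SSP n k S f <-> [/\ signed_family f, minabs_sorted f & S = support f :&: posn n].
Proof.
move=> Spos; rewrite /SSP sblocksE; split.
- case/and5P => _ _ /and3P [/eqP fcov /trivIsetP fpart f0] fcard fsorted.
  have finj : injective (sblock f).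
    have cardT : #|{: 'I_k * bool}| = k.*2 by rewrite card_prod card_ord card_bool muln2.
    by move: fcard; rewrite -cardT => /imset_injP finj p q; apply: finj.
  split; last by rewrite /support fcov setU_negS_posn.
  + split=> [p|p q pq|p].
    * by apply: contraNneq f0 => <-; apply: mem_sblocks.
    * by apply: fpart; rewrite ?mem_sblocks //; apply: contra_neq pq => /finj.
    * apply: contraTN (sblock_sub_support f p) => p0; apply/subsetPn; exists (zero n) => //.
      rewrite /support fcov in_setU mem_negS neg_zero orbb.
      by apply/negP => /(subsetP Spos); apply/negP; apply: zero_notin_posn.
  + by move=> i j; move/forallP: fsorted => /(_ i) /forallP /(_ j) /implyP.
- case=> ff fsorted ->; rewrite support_posn //.
  have [fne fdisj _] := ff; apply/and5P; split.
  + by apply/forallP => i; rewrite (sblock_sub_support f (i, true)) (fne (i, true)).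
  + apply/forallP => i; apply/forallP => j; apply/implyP => ij.
    by apply: (fdisj (i, true) (j, true)); rewrite xpair_eqE (negPf ij).
  + apply/and3P; split => //.
    * apply/trivIsetP => _ _ /imsetP [p _ ->] /imsetP [q _ ->] pq.
      by apply: fdisj; apply: contraNneq pq => ->.
    * by apply/imsetP => -[p _ /esym/eqP]; apply/negP.
  + by rewrite card_sblocks.
  + by apply/forallP => i; apply/forallP => j; apply/implyP => /fsorted.
Qed.

End SignedFamilies.

Lemma D_subP n k (f : {ffun 'I_k -> {set elt n}}) :
  f \in D_sub n k <->
  [/\ signed_family f, minabs_sorted f & #|posn n :\: support f| != 1].
Proof.
have posn_support : posn n :\: (support f :&: posn n) = posn n :\: support f.
  by rewrite setDIr setDv setU0.
have /card_setD_eq1P := subsetIr (support f) (posn n); rewrite posn_support => card1P.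
rewrite !inE; split.
- case/andP => /bigcupP notB /existsP [S /andP [Spos]].
  rewrite inE => /(SSP_signed_family _ Spos) [ff fsorted eS]; split => //.
  apply/negP => /card1P [i ip ei]; apply: notB; exists i; rewrite // inE.
  by apply/SSP_signed_family; [apply: subsetDl | split].
- case=> ff fsorted f1; apply/andP; split.
  + apply/bigcupP => -[i ip]; rewrite inE => /(SSP_signed_family _ (subsetDl _ _)) [_ _ ei].
    by move/negP: f1; apply; apply/card1P; exists i.
  + apply/existsP; exists (support f :&: posn n); rewrite subsetIr inE.
    by apply/SSP_signed_family; [apply: subsetIr | split].
Qed.

Section BlockIndex.
Variable k : nat.
Implicit Types p : 'I_k * bool.

Definition block_index p : 'I_(k.*2.+1) :=
  inord (if p.2 then p.1.*2.+1 else p.1.*2.+2).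

Lemma val_block_index p :
  (block_index p : nat) = if p.2 then p.1.*2.+1 else p.1.*2.+2.
Proof. by rewrite inordK //; have := ltn_ord p.1; case: p.2; rewrite -!addnn; lia. Qed.

Lemma block_index_inj : injective block_index.
Proof.
move=> [i b] [j c] /(congr1 val) /=; rewrite !val_block_index /= -!addnn => e.
have ij : i = j by apply: ord_inj; case: b c e => -[] /=; lia.
by subst j; case: b c e => -[] //= e; exfalso; lia.
Qed.

Lemma block_index_neq0 p : block_index p != ord0.
Proof. by rewrite -val_eqE /= val_block_index; case: p.2. Qed.

Lemma block_indexP (j : 'I_(k.*2.+1)) : j = ord0 \/ exists p, j = block_index p.
Proof.
have [j0|j0] := eqVneq j ord0; [by left | right].
have := odd_double_half (j : nat).-1; have := ltn_ord j.
move: j0; rewrite -val_eqE /=; case: j => m mi /=.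
set q := m.-1./2; set b := odd m.-1 => m0 mk e.
have qk : q < k by move: e mk; rewrite -!addnn; case: b => /=; lia.
exists (Ordinal qk, ~~ b); apply: ord_inj; rewrite val_block_index /=.
by move: e m0; rewrite -!addnn; case: b => /=; lia.
Qed.

End BlockIndex.

Section TypeDPartitions.
Variables n k : nat.
Implicit Types (f : 'I_k -> {set elt n}) (T : {ffun 'I_(k.*2.+1) -> {set elt n}}).

Definition ordered_blocks f : {ffun 'I_(k.*2.+1) -> {set elt n}} :=
  [ffun j => if [pick p | block_index p == j] is Some p then sblock f p
             else ~: support f].

Lemma ordered_blocks0 f : ordered_blocks f ord0 = ~: support f.
Proof.
rewrite ffunE; case: pickP => [p /eqP e|//].
by have := block_index_neq0 p; rewrite e eqxx.
Qed.

Lemma ordered_blocksE f p : ordered_blocks f (block_index p) = sblock f p.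
Proof.
rewrite ffunE; case: pickP => [q /eqP /block_index_inj -> //|].
by move=> /(_ p); rewrite eqxx.
Qed.

Lemma imset_ordered_blocks f : [set ordered_blocks f j | j : 'I_(k.*2.+1)] = blocks f.
Proof.
apply/setP => X; apply/imsetP/setU1P => [[j _ ->]|].
  by case: (block_indexP j) => [->|[p ->]]; rewrite ?ordered_blocks0 ?ordered_blocksE;
    [left | right; apply: mem_sblocks].
case=> [->|/imsetP [p _ ->]]; first by exists ord0; rewrite ?ordered_blocks0.
by exists (block_index p); rewrite ?ordered_blocksE.
Qed.

Lemma ordered_signed_partition_blocks f :
  signed_family f -> ordered_signed_partition n k (ordered_blocks f).
Proof.
move=> ff; have [fne fdisj _] := ff.
have Tsym : ordered_blocks f ord0 == negS (ordered_blocks f ord0).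
  by rewrite ordered_blocks0; apply/eqP/setP => x; rewrite mem_negS !in_setC -mem_negS negS_support.
have T0 : zero n \in ordered_blocks f ord0 by rewrite ordered_blocks0 in_setC zero_notin_support.
have Tpairs : [forall i : 'I_k, ordered_blocks f (inord (i.*2.+2))
                 == negS (ordered_blocks f (inord (i.*2.+1)))].
  apply/forallP => i; rewrite -[inord _]/(block_index (i, false)).
  by rewrite -[inord (i.*2.+1)]/(block_index (i, true)) !ordered_blocksE.
have Tne : [forall j, ordered_blocks f j != set0].
  by apply/forallP => j; case: (block_indexP j) => [->|[p ->]];
    [apply/set0Pn; exists (zero n) | rewrite ordered_blocksE].
have Tcov : \bigcup_j ordered_blocks f j == [set: elt n].
  apply/eqP/setP => x; rewrite inE; apply/bigcupP.
  case/boolP: (x \in support f) => [/mem_support [p xp]|xf].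
    by exists (block_index p); rewrite ?ordered_blocksE.
  by exists ord0; rewrite ?ordered_blocks0 ?in_setC.
have Tdisj : [forall i, forall j, (i != j) ==> [disjoint ordered_blocks f i & ordered_blocks f j]].
  apply/forallP => i; apply/forallP => j; apply/implyP => ij.
  case: (block_indexP i) (block_indexP j) ij => [->|[p ->]] [->|[q ->]];
    rewrite ?eqxx // ?ordered_blocks0 ?ordered_blocksE => pq.
  - by rewrite disjoint_sym disjoints_subset setCK sblock_sub_support.
  - by rewrite disjoints_subset setCK sblock_sub_support.
  - by apply: fdisj; apply: contra_neq pq => ->.
by rewrite /ordered_signed_partition Tdisj Tne Tcov T0 Tsym Tpairs.
Qed.

Lemma typeD_blocks f : signed_family f -> #|posn n :\: support f| != 1 ->
  typeD_signed_partition n k (blocks f).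
Proof.
move=> ff f1; apply/existsP; exists (ordered_blocks f).
rewrite ordered_signed_partition_blocks // imset_ordered_blocks eqxx /=.
by rewrite ordered_blocks0 card_setC_support //; move: f1; lia.
Qed.

Lemma ordered_signed_partition_sblock T f : ordered_signed_partition n k T ->
  (forall p, T (block_index p) = sblock f p) -> signed_family f /\ T = ordered_blocks f.
Proof.
case/andP => /andP [/andP [/andP [/andP [/forallP Tdisj /forallP Tne] /eqP Tcov] T0] _] _ Tf.
have Tdisj' i j : i != j -> [disjoint T i & T j] by move/forallP: (Tdisj i) => /(_ j) /implyP.
have T0disj p : [disjoint T ord0 & T (block_index p)].
  by apply: Tdisj'; rewrite eq_sym block_index_neq0.
have ff : signed_family f.
  split=> [p|p q pq|p]; rewrite -?Tf //.
  - by apply: Tdisj'; apply: contra_neq pq => /block_index_inj.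
  - by rewrite (disjointFr (T0disj p) T0).
have Tsupport : ~: T ord0 = support f.
  apply/setP => x; rewrite in_setC; apply/idP/mem_support => [xT|[p]].
    have /bigcupP [j _] : x \in \bigcup_j T j by rewrite Tcov inE.
    case: (block_indexP j) => [->|[p ->]]; first by rewrite (negPf xT).
    by rewrite Tf; exists p.
  by rewrite -Tf => /(disjointFl (T0disj p)) ->.
split=> //; apply/ffunP => j; case: (block_indexP j) => [->|[p ->]].
  by rewrite ordered_blocks0 -Tsupport setCK.
by rewrite ordered_blocksE Tf.
Qed.

Lemma typeD_signed_partition_blocks P : typeD_signed_partition n k P ->
  exists f, [/\ signed_family f, #|posn n :\: support f| != 1 & P = blocks f].
Proof.
case/existsP => T /and3P [T_osp /eqP -> T3].
pose f i := T (block_index (i, true)).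
have Tf p : T (block_index p) = sblock f p.
  by case: p => i [] //; case/andP: T_osp => _ /forallP /(_ i) /eqP.
have [ff Tblocks] := ordered_signed_partition_sblock T_osp Tf.
exists f; split => //; last by rewrite Tblocks imset_ordered_blocks.
by move: T3; rewrite Tblocks ordered_blocks0 card_setC_support //; lia.
Qed.

End TypeDPartitions.

Section Signs.
Variable n : nat.
Implicit Types X : {set elt n}.

Definition pos m : elt n := inord (n + m).

(* Of two disjoint blocks X and -X exactly one contains +min |X|. *)
Definition sign X := pos (minabs X) \in X.

Lemma absn_pos m : m <= n -> absn (pos m) = m.
Proof. by move=> mn; rewrite /absn /ival /pos inordK; lia. Qed.

Lemma sign_negS X : X != set0 -> [disjoint X & negS X] -> sign (negS X) = ~~ sign X.
Proof.
move=> Xne Xdisj; rewrite /sign minabs_negS mem_negS.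
have [x xX ex] := minabs_attained Xne.
have nxX : (neg x \in X) = false by rewrite -(disjointFr Xdisj xX) mem_negS.
have /eq_absn [->|->] : absn x = absn (pos (minabs X)) by rewrite absn_pos // -ex absn_le.
  by rewrite nxX xX.
by rewrite negK xX nxX.
Qed.

End Signs.

Lemma exists_sorting_perm k (key : 'I_k -> nat) :
  exists2 s : 'I_k -> 'I_k, injective s &
    forall i j : 'I_k, i <= j -> key (s i) <= key (s j).
Proof.
pose r := relpre key leq.
have r_sorted : sorted r (sort r (enum 'I_k)) by apply: sort_sorted => a b; apply: leq_total.
have sz : size (sort r (enum 'I_k)) == k by rewrite size_sort size_enum_ord.
exists (tnth (Tuple sz)).
  by apply/tuple_uniqP; rewrite sort_uniq enum_uniq.
move=> i j ij; rewrite !(tnth_nth i) /=.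
apply: (sorted_leq_nth (leT := r)) => //; rewrite ?inE ?(eqP sz) //.
- by move=> ? ? ?; apply: leq_trans.
- by move=> ?; apply: leqnn.
Qed.

Lemma sorted_ltn_map_ord k (h : 'I_k -> nat) :
  {homo h : i j / i < j} -> sorted ltn [seq h i | i <- enum 'I_k].
Proof.
move=> h_mono; rewrite sorted_map.
have : sorted (relpre val ltn) (enum 'I_k) by rewrite -sorted_map val_enum_ord iota_ltn_sorted.
by apply: sub_sorted => i j; apply: h_mono.
Qed.

Section SortedFamilies.
Variables n k : nat.
Implicit Types f g : 'I_k -> {set elt n}.

Lemma signed_family_reindex f0 f (tau : 'I_k * bool -> 'I_k * bool) :
  signed_family f0 -> injective tau -> (forall p, sblock f p = sblock f0 (tau p)) ->
  signed_family f /\ sblocks f = sblocks f0.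
Proof.
move=> [f0ne f0disj f00] tau_inj ftau; split.
  split=> [p|p q pq|p]; rewrite ?ftau //; apply: f0disj.
  by apply: contra_neq pq => /tau_inj.
apply/setP => X; apply/imsetP/imsetP => [[p _ ->]|[q _ ->]].
  by exists (tau p); rewrite ?ftau.
have /codomP [p ->] := inj_card_onto tau_inj (leqnn _) q.
by exists p; rewrite ?ftau.
Qed.

Lemma sorted_resigned_family f0 (s : {ffun 'I_k -> bool}) : signed_family f0 ->
  exists f : {ffun 'I_k -> {set elt n}}, [/\ signed_family f, minabs_sorted f,
    sblocks f = sblocks f0 & forall i, sign (f i) = s i].
Proof.
move=> ff0; have [f0ne f0disj _] := ff0.
have [sg sg_inj sg_sorted] := exists_sorting_perm (fun i => minabs (f0 i)).
pose c i := sign (f0 (sg i)) == s i.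
pose f := [ffun i => sblock f0 (sg i, c i)].
pose tau p := (sg p.1, if p.2 then c p.1 else ~~ c p.1).
have ftau p : sblock f p = sblock f0 (tau p).
  by case: p => i []; rewrite /sblock /= ffunE // -/(sblock f0 (sg i, c i)) negS_sblock.
have tau_inj : injective tau.
  by move=> [i b] [j b'] [/sg_inj <-]; case: b b' => -[] //=; case: (c i).
have [ff fblocks] := signed_family_reindex ff0 tau_inj ftau.
exists f; split => // [i j ij|i]; first by rewrite !ffunE !minabs_sblock sg_sorted.
rewrite ffunE /c; case: eqP => [<-|] //=.
rewrite /sblock /= sign_negS ?(f0ne (sg i, true)) //; last first.
  by apply: (f0disj (sg i, true) (sg i, false)); rewrite xpair_eqE andbF.
by case: (s i); case: (sign _).
Qed.

Lemma minabs_sorted_lt f : signed_family f -> minabs_sorted f ->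
  {homo (fun i => minabs (f i)) : i j / i < j}.
Proof.
move=> ff fsorted i j ij; rewrite ltn_neqAle fsorted ?(ltnW ij) // andbT.
by apply: contraTneq ij => /(minabs_inj ff) ->; rewrite ltnn.
Qed.

Lemma sblocks_eq_sblock f g i : sblocks f = sblocks g -> exists q, f i = sblock g q.
Proof.
move=> fg; have : sblock f (i, true) \in sblocks g by rewrite -fg mem_sblocks.
by case/imsetP => q _ fq; exists q.
Qed.

Lemma sorted_signed_family_eq f g : signed_family f -> signed_family g ->
  minabs_sorted f -> minabs_sorted g -> sblocks f = sblocks g ->
  (forall i, sign (f i) = sign (g i)) -> f =1 g.
Proof.
move=> ff gg fsorted gsorted fg fgsign.
have mem_keys f1 g1 : sblocks f1 = sblocks g1 ->
    {subset [seq minabs (f1 i) | i <- enum 'I_k] <= [seq minabs (g1 i) | i <- enum 'I_k]}.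
  move=> fg1 _ /mapP [i _ ->]; have [q ->] := sblocks_eq_sblock i fg1.
  by rewrite minabs_sblock (map_f (fun i => minabs (g1 i))) ?mem_enum.
(* Both sequences enumerate {min |X| : X in sblocks f} increasingly. *)
have : [seq minabs (f i) | i <- enum 'I_k] = [seq minabs (g i) | i <- enum 'I_k].
  apply: (irr_sorted_eq ltn_trans ltnn).
  - exact/sorted_ltn_map_ord/(minabs_sorted_lt ff fsorted).
  - exact/sorted_ltn_map_ord/(minabs_sorted_lt gg gsorted).
  - by move=> x; apply/idP/idP; apply: mem_keys.
move/eq_in_map => fg_minabs i.
have [[j b] fi] := sblocks_eq_sblock i fg.
have ji : j = i.
  by apply: (minabs_inj gg); rewrite -(minabs_sblock g (j, b)) -fi fg_minabs ?mem_enum.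
move: (fgsign i) fi; rewrite ji; case: b => [_ -> //|+ fi]; rewrite fi.
have [gne gdisj _] := gg.
rewrite /sblock /= sign_negS ?(gne (i, true)) //; first by case: (sign _).
by apply: (gdisj (i, true) (i, false)); rewrite xpair_eqE andbF.
Qed.

End SortedFamilies.

Theorem lemma3p1 (n k : nat) : k <= n -> 2 ^ k * S_D n k = #|D_sub n k|.
Proof.
move=> _.
pose Psi (f : {ffun 'I_k -> {set elt n}}) := (blocks f, [ffun i => sign (f i)]).
have Psi_inj : {in D_sub n k &, injective Psi}.
  move=> f g /D_subP [ff fsorted _] /D_subP [gg gsorted _] [fg /ffunP fgsign].
  apply/ffunP; apply: (sorted_signed_family_eq ff gg fsorted gsorted).
  - by rewrite (sblocks_blocks ff) (sblocks_blocks gg) fg.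
  - by move=> i; have := fgsign i; rewrite !ffunE.
have Psi_image : Psi @: D_sub n k =
    setX [set P | typeD_signed_partition n k P] [set: {ffun 'I_k -> bool}].
  apply/setP => -[P s]; rewrite !inE andbT /=; apply/imsetP/idP.
  - by case=> f /D_subP [ff _ f1]; rewrite /Psi => -[-> _]; apply: typeD_blocks.
  - case/typeD_signed_partition_blocks => f0 [ff0 f01 ->].
    have [f [ff fsorted fblocks fsign]] := sorted_resigned_family s ff0.
    exists f; first by apply/D_subP; split => //; rewrite /support fblocks.
    rewrite /Psi /blocks /support fblocks; congr pair.
    by apply/ffunP => i; rewrite ffunE fsign.
rewrite -(card_in_imset Psi_inj) Psi_image cardsX cardsT card_ffun card_bool card_ord.
by rewrite mulnC.
Qed.
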